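(* Let $p$ be an odd prime, $\ell$ an integer not divisible by $p$, $a$ the remainder of $\ell$ mod $p$, $\nu_i=\lfloor\frac{a+i\ell}{p}\rfloor$ and $n_i=\min_{0\le j\le p-1-i}(\nu_{i+j}-\nu_j)$ for $0\le i\le p-1$. Fix $0\le k,i\le p-1$ with $k+i\le p-1$ and put $h=p-i$, and for $0\le j\le p-1$ let $\mu^{(k)}_{j,i}=\delta_{j,k+i}\,\pi_K^{\nu_j-\nu_k-n_i}$ (these lie in $\mathcal{O}_K$), with $\overline{\mu}^{(k)}_{j,i}$ its reduction modulo $\mathfrak{p}_K$. Then: (1) if $j\ne k+i$, $\overline{\mu}^{(k)}_{j,i}=0$; (2) if $h\notin E$, then $\overline{\mu}^{(k)}_{k+i,i}=1$ if $h=p$ or $\operatorname{frac}((k+1)a/p)<\operatorname{frac}(ha/p)$, and $\overline{\mu}^{(k)}_{k+i,i}=0$ otherwise; (3) if $h\in E$, then $\overline{\mu}^{(k)}_{k+i,i}=1$.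
   Context: $K$ is a $p$-adic field with uniformizer $\pi_K$ and maximal ideal $\mathfrak{p}_K$. For a real $x$, $\operatorname{frac}(x)=x-\lfloor x\rfloor$. $E=\{h\in\mathbb{Z}: 1\le h<p,\ \text{and for all integers } 1\le h'<h,\ \operatorname{frac}(h'a/p)>\operatorname{frac}(ha/p)\}$. (Interpretation: in the typical setting with $H=K[w]$, $\mu^{(k)}_{j,i}$ is the coefficient of $\pi_K^{-\nu_j}w^j$ in $\pi_K^{-\nu_k}w^k\cdot\pi_K^{-n_i}w^i$, i.e. the $(j,i)$ entry of the matrix of multiplication by $\pi_K^{-\nu_k}w^k$ from the basis $\{\pi_K^{-n_i}w^i\}$ of $\mathfrak{A}_{L/K}$ to the basis $\{\pi_K^{-\nu_j}w^j\}$ of $\mathfrak{A}_\theta$.) *)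

From mathcomp Require Import all_boot all_order all_algebra.
Set Implicit Arguments. Unset Strict Implicit. Unset Printing Implicit Defensive.
Import Order.TTheory GRing.Theory Num.Theory.
Local Open Scope ring_scope.

Definition arem (p : nat) (l : int) : int := (l %% p%:Z)%Z.

(* nu_i = floor((a + i l)/p); for p > 0, intdiv's %/ is the floor. *)
Definition nu (p : nat) (l : int) (i : nat) : int :=
  ((arem p l + i%:Z * l) %/ p%:Z)%Z.

(* n_i = min_{0 <= j <= p-1-i} (nu_{i+j} - nu_j)  (j = 0 is the seed) *)
Definition nmin (p : nat) (l : int) (i : nat) : int :=
  \big[Order.min/(nu p l i - nu p l 0)]_(j < (p - i)%N)
     (nu p l (i + j) - nu p l j).

Definition fracq (x : rat) : rat := x - (Num.floor x)%:~R.

Definition fr (p : nat) (l : int) (h : nat) : rat :=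
  fracq ((h%:Z * arem p l)%:~R / p%:~R).

Definition in_E (p : nat) (l : int) (h : nat) : Prop :=
  (1 <= h)%N /\ (h < p)%N /\
  (forall h' : nat, (1 <= h')%N -> (h' < h)%N -> fr p l h < fr p l h').

Definition mu_exp (p : nat) (l : int) (k i : nat) : int :=
  nu p l (k + i) - nu p l k - nmin p l i.

(* mu^{(k)}_{j,i} = delta_{j,k+i} pi^{nu_j - nu_k - n_i}, as an element of O
   (the exponent is shown nonnegative in the statement). *)
Definition mu (O : pzRingType) (piK : O) (p : nat) (l : int) (k j i : nat) : O :=
  if j == (k + i)%N then piK ^+ `|mu_exp p l k i|%N else 0.

From Pilot Require Import Defs.
From mathcomp Require Import all_boot all_order all_algebra.
From mathcomp Require Import ring zify.
Set Implicit Arguments. Unset Strict Implicit. Unset Printing Implicit Defensive.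
Import Order.TTheory GRing.Theory Num.Theory.
Local Open Scope ring_scope.

(* Write r(x) for the residue of x a modulo p. Splitting a + (i + j) l as
   (a + j l) + i l gives nu_(i+j) - nu_j = floor(i l / p) + c_j, where the carry
   c_j in {0, 1} says r(j + 1) + r(i) >= p. Hence n_i = floor(i l / p) + 1 exactly
   when all the carries c_0, ..., c_(p-1-i) occur, and the exponent of mu is c_k
   minus that indicator: mu reduces to 1 iff c_k = 0 or every carry occurs.
   For 0 < i, r(i) + r(h) = p, so c_j says r(h) <= r(j + 1); as x |-> r(x) is
   injective on [0, p), "every carry occurs" is precisely h \in E. *)

Lemma divzD_carry (u v : int) (d : nat) : (0 < d)%N ->
  ((u + v) %/ d)%Z =
    (u %/ d)%Z + (v %/ d)%Z + ((d%:Z <= (u %% d)%Z + (v %% d)%Z)%R : nat)%:Z.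
Proof.
move=> d_gt0; have dn0 : d%:Z != 0 by rewrite eqz_nat -lt0n.
have ru_ge0 := modz_ge0 u dn0; have rv_ge0 := modz_ge0 v dn0.
have ru_lt := ltz_pmod u (d_gt0 : (0 < d%:Z)).
have rv_lt := ltz_pmod v (d_gt0 : (0 < d%:Z)).
rewrite {1}(divz_eq u d) {1}(divz_eq v d).
set qu := (u %/ d)%Z; set qv := (v %/ d)%Z; set ru := (u %% d)%Z; set rv := (v %% d)%Z.
case: leP => [carry | no_carry].
- have -> : qu * d + ru + (qv * d + rv) = (qu + qv + 1) * d%:Z + (ru + rv - d%:Z) by ring.
  by rewrite divzMDl // divz_small ?addr0 //; apply/andP; split; [lia | rewrite gez0_abs; lia].
- have -> : qu * d + ru + (qv * d + rv) = (qu + qv) * d%:Z + (ru + rv) by ring.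
  by rewrite divzMDl // divz_small ?addr0 //; apply/andP; split; [lia | rewrite gez0_abs; lia].
Qed.

Definition residue (p : nat) (l : int) (x : nat) : nat := (x * `|arem p l| %% p)%N.

Definition carry (p : nat) (l : int) (i j : nat) : bool :=
  (p <= residue p l j.+1 + residue p l i)%N.

Definition all_carry (p : nat) (l : int) (i : nat) : bool :=
  [forall j : 'I_(p - i), carry p l i j].

Section Residues.

Variables (p : nat) (l : int).
Hypothesis p_gt0 : (0 < p)%N.

Let a := `|arem p l|%N.

Lemma arem_nat : arem p l = a%:Z.
Proof. by rewrite /a abszE ger0_norm // modz_ge0 // eqz_nat -lt0n. Qed.

Lemma residue_lt x : (residue p l x < p)%N.
Proof. exact: ltn_pmod. Qed.

Lemma fr_residue h : fr p l h = (residue p l h)%:R / p%:R.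
Proof.
have p_pos : (0 : rat) < p%:R by rewrite ltr0n.
rewrite /fr arem_nat -PoszM /residue -/a; set n := (h * a)%N.
have -> : (n%:Z%:~R : rat) / p%:Z%:~R = (n %/ p)%N%:R + (n %% p)%N%:R / p%:R.
  by rewrite -!pmulrn {1}(divn_eq n p) natrD natrM mulrDl mulfK ?gt_eqF.
rewrite /Defs.fracq (@floor_def _ _ (n %/ p)%N); last first.
  rewrite -pmulrn lerDl divr_ge0 ?ler0n //= intrD -pmulrn ltrD2l.
  by rewrite ltr_pdivrMr // mul1r ltr_nat ltn_pmod.
by rewrite -pmulrn addrC addKr.
Qed.

Lemma ltr_fr x y : (fr p l x < fr p l y) = (residue p l x < residue p l y)%N.
Proof. by rewrite !fr_residue ltr_pM2r ?invr_gt0 ?ltr0n // ltr_nat. Qed.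

Lemma nu_addn i j :
  nu p l (i + j) - nu p l j = ((i%:Z * l) %/ p)%Z + (carry p l i j : nat)%:Z.
Proof.
have res_l x : ((x%:Z * l) %% p)%Z = (residue p l x)%:Z.
  by rewrite -modzMmr -/(arem p l) arem_nat -PoszM modz_nat.
have res_al x : ((arem p l + x%:Z * l) %% p)%Z = (residue p l x.+1)%:Z.
  by rewrite -modzDmr res_l arem_nat -PoszD modz_nat /residue modnDmr mulSn.
rewrite /nu /carry PoszD mulrDl (addrC (i%:Z * l)) addrA.
rewrite (divzD_carry (arem p l + j%:Z * l)) // res_al res_l -PoszD lez_nat; ring.
Qed.

Lemma all_carry_le k i : (k < p - i)%N -> (all_carry p l i <= carry p l i k)%N.
Proof.
by move=> lt_k; case: (boolP (all_carry _ _ _)) => // /forallP /(_ (Ordinal lt_k)) ->.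
Qed.

Lemma nmin_carry i : (i < p)%N ->
  nmin p l i = ((i%:Z * l) %/ p)%Z + (all_carry p l i : nat)%:Z.
Proof.
move=> lt_ip; have lt0_pi : (0 < p - i)%N by rewrite subn_gt0.
have seed : nu p l i - nu p l 0 = ((i%:Z * l) %/ p)%Z + (carry p l i 0 : nat)%:Z.
  by rewrite -nu_addn addn0.
rewrite /nmin; apply/le_anti/andP; split; last first.
  apply: le_bigmin => [|j _]; rewrite ?seed ?nu_addn lerD2l lez_nat all_carry_le //.
case: (boolP (all_carry p l i)) => [_ | /forallPn [j not_carry]].
  apply: le_trans (bigmin_le _ (Ordinal lt0_pi) _) _.
  by rewrite /= addn0 seed lerD2l lez_nat leq_b1.
apply: le_trans (bigmin_le _ j _) _.
by rewrite nu_addn (negbTE not_carry).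
Qed.

Lemma mu_exp_carry k i : (k < p - i)%N ->
  mu_exp p l k i = (carry p l i k : nat)%:Z - (all_carry p l i : nat)%:Z.
Proof.
move=> lt_k; rewrite /mu_exp addnC nu_addn nmin_carry; last by lia.
by ring.
Qed.

Lemma mu_exp_ge0 k i : (k < p - i)%N -> 0 <= mu_exp p l k i.
Proof. by move=> lt_k; rewrite mu_exp_carry // subr_ge0 lez_nat all_carry_le. Qed.

Lemma mu_exp_eq0 k i : (k < p - i)%N ->
  (mu_exp p l k i == 0) = carry p l i k ==> all_carry p l i.
Proof.
move=> lt_k; rewrite mu_exp_carry // subr_eq0 eqz_nat.
by have := all_carry_le lt_k; case: carry; case: all_carry.
Qed.

Hypotheses (p_prime : prime p) (l_ndvd : ~~ (p%:Z %| l)%Z).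

Lemma residue_inj x y : (x < p)%N -> (y < p)%N -> residue p l x = residue p l y -> x = y.
Proof.
have a_lt : (a < p)%N by have := ltz_pmod l (p_gt0 : (0 < p%:Z)); rewrite -/(arem p l) arem_nat.
have a_gt0 : (0 < a)%N.
  rewrite lt0n; apply: contra l_ndvd => /eqP a0.
  by apply/dvdz_mod0P; rewrite -/(arem p l) arem_nat a0.
have p_ndvd_a : ~~ (p %| a)%N by rewrite gtnNdvd.
wlog le_xy : x y / (x <= y)%N => [wlog_le x_lt y_lt eq_xy | x_lt y_lt eq_xy].
  by case: (leqP x y) => [|/ltnW] le; [| symmetry]; apply: wlog_le.
have : (p %| (y - x) * a)%N.
  by rewrite mulnBl -eqn_mod_dvd ?leq_mul2r ?le_xy ?orbT //; apply/eqP; move: eq_xy; rewrite /residue.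
rewrite Euclid_dvdM // (negbTE p_ndvd_a) orbF.
by case: (posnP (y - x)) => [|pos /(dvdn_leq pos)]; lia.
Qed.

Lemma residue_compl i : (0 < i < p)%N -> (residue p l i + residue p l (p - i) = p)%N.
Proof.
move=> /andP [i_gt0 i_lt].
have res_gt0 x : (0 < x < p)%N -> (0 < residue p l x)%N.
  move=> /andP [x_gt0 x_lt]; rewrite lt0n; apply/eqP => res0.
  by have := @residue_inj x 0 x_lt p_gt0; rewrite res0 /residue mul0n mod0n; lia.
have sum_mod : ((residue p l i + residue p l (p - i)) %% p = 0)%N.
  by rewrite /residue modnDm -mulnDl subnKC ?modnMr // ltnW.
have := divn_eq (residue p l i + residue p l (p - i)) p; rewrite sum_mod addn0.
have := res_gt0 i; have := res_gt0 (p - i)%N; have := residue_lt i; have := residue_lt (p - i)%N.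
case: (_ %/ p)%N => [|[|q]]; rewrite ?mul0n ?mul1n ?mulSn; lia.
Qed.

Lemma carry_compl i j : (0 < i < p)%N ->
  carry p l i j = (residue p l (p - i) <= residue p l j.+1)%N.
Proof. by move=> i_bounds; rewrite /carry -{1}(residue_compl i_bounds) addnC leq_add2r. Qed.

Lemma all_carryP i : (0 < i < p)%N -> reflect (in_E p l (p - i)) (all_carry p l i).
Proof.
move=> i_bounds; set h := (p - i)%N.
have h_bounds : (0 < h < p)%N by rewrite /h; lia.
apply: (iffP forallP) => [all_le | [_ [_ E_lt]] j].
- split; [lia | split; [lia |]].
  move=> h' h'_gt0 h'_lt; have h'_pred : (h'.-1 < h)%N by lia.
  have := all_le (Ordinal h'_pred); rewrite carry_compl //= prednK // ltr_fr.
  rewrite leq_eqVlt => /orP [/eqP /residue_inj eq_h|//].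
  by have := eq_h ltac:(lia) ltac:(lia); lia.
- rewrite carry_compl //; have := ltn_ord j; rewrite leq_eqVlt => /orP [/eqP -> //|lt_h].
  by rewrite ltnW // -ltr_fr E_lt.
Qed.

End Residues.

Lemma rmorph_mu_offdiag (O F : pzRingType) (red : {rmorphism O -> F}) (piK : O)
    (p : nat) (l : int) (k j i : nat) :
  j != (k + i)%N -> red (mu piK p l k j i) = 0.
Proof. by move=> neq_j; rewrite /mu (negbTE neq_j) rmorph0. Qed.

Lemma rmorph_mu_diag (O F : pzRingType) (red : {rmorphism O -> F}) (piK : O)
    (p : nat) (l : int) (k i : nat) :
  red piK = 0 -> red (mu piK p l k (k + i) i) = (mu_exp p l k i == 0)%:R.
Proof. by move=> red_pi; rewrite /mu eqxx rmorphXn red_pi expr0n absz_eq0. Qed.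

Theorem proposition7p4 (p : nat) (l : int)
  (O : comNzRingType) (F : fieldType) (red : {rmorphism O -> F}) (piK : O)
  (k i : nat) :
  prime p -> odd p -> ~~ (p%:Z %| l)%Z ->
  red piK = 0 ->
  (k + i <= p - 1)%N ->
  let h := (p - i)%N in
  (0 <= mu_exp p l k i)%R /\
  (forall j : nat, (j <= p - 1)%N -> j != (k + i)%N -> red (mu piK p l k j i) = 0) /\
  (~ in_E p l h ->
     red (mu piK p l k (k + i) i) =
       (if (h == p) || (fr p l (k + 1) < fr p l h) then 1 else 0)) /\
  (in_E p l h -> red (mu piK p l k (k + i) i) = 1).
Proof.
move=> p_prime _ l_ndvd red_pi le_ki h.
have p_gt0 := prime_gt0 p_prime.
have lt_k : (k < p - i)%N by lia.
split; first exact: mu_exp_ge0.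
split; first by move=> j _; apply: rmorph_mu_offdiag.
rewrite rmorph_mu_diag // mu_exp_eq0 //.
have [i0 | i_gt0] := posnP i.
  have no_carry : carry p l i k = false.
    by rewrite /carry i0 /residue mul0n mod0n addn0 leqNgt ltn_pmod.
  by rewrite no_carry /h i0 subn0 eqxx.
have i_bounds : (0 < i < p)%N by lia.
have h_lt : (h < p)%N by rewrite /h; lia.
rewrite carry_compl // (ltn_eqF h_lt) ltr_fr // addn1 leqNgt.
split => [not_E | in_E_h].
  by rewrite (negbTE (introN (all_carryP p_gt0 p_prime l_ndvd i_bounds) not_E)); case: ltnP.
by rewrite (introT (all_carryP p_gt0 p_prime l_ndvd i_bounds) in_E_h) implybT.
Qed.
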